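(* Let $X=\{x_j:j\in J\}\subset\mathbb{R}^2$ be finite with $n=|J|$, and suppose its $1$-centre $C$ is equidistant from all points of $X$. Then $C$ is the quadratic min-power centre of $X$ if and only if $C\in\mathrm{conv}(\mathcal{M})$.
   Context: The quadratic min-power centre is the unique minimiser of $P(s)=\sum_{i\in J}\|s-x_i\|^2+\max_{i\in J}\|s-x_i\|^2$. $C$ is the centre of the minimum enclosing circle of $X$. $\mathcal{M}=\{M_j:j\in J\}$ with $M_j=\frac{1}{n+1}\big(x_j+\sum_{i\in J}x_i\big)$. *)

From HB Require Import structures.
From mathcomp Require Import all_boot all_order all_algebra.
From mathcomp Require Import reals.
Set Implicit Arguments. Unset Strict Implicit. Unset Printing Implicit Defensive.
Import Order.TTheory GRing.Theory Num.Theory.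
Local Open Scope ring_scope.

Section Defs.
Variable R : realType.
Variable J : finType.
Implicit Types (x : J -> 'rV[R]_2) (s : 'rV[R]_2).

Definition enorm (v : 'rV[R]_2) : R := Num.sqrt (\sum_(i < 2) v 0 i ^+ 2).

(* max_{i in J} ||s - x_i|| (J nonempty in use; distances are >= 0) *)
Definition maxdist x s : R := \big[Num.max/0]_(i : J) enorm (s - x i).

Definition is_1centre x (c : 'rV[R]_2) : Prop := forall s, maxdist x c <= maxdist x s.

Definition Ppow x s : R :=
  \sum_(i : J) enorm (s - x i) ^+ 2 + \big[Num.max/0]_(i : J) enorm (s - x i) ^+ 2.

Definition is_qmp_centre x (c : 'rV[R]_2) : Prop := forall s, Ppow x c <= Ppow x s.

Definition Mpt x (j : J) : 'rV[R]_2 := (#|J|.+1%:R)^-1 *: (x j + \sum_(i : J) x i).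

Definition in_conv (y : J -> 'rV[R]_2) (p : 'rV[R]_2) : Prop :=
  exists w : J -> R, (forall j, 0 <= w j) /\ \sum_(j : J) w j = 1 /\
                      p = \sum_(j : J) w j *: y j.
End Defs.

From HB Require Import structures.
From mathcomp Require Import all_boot all_order all_algebra.
From mathcomp Require Import reals.
From mathcomp Require Import ring lra.
Set Implicit Arguments. Unset Strict Implicit. Unset Printing Implicit Defensive.
Import Order.TTheory GRing.Theory Num.Theory.
Local Open Scope ring_scope.

(* Write n = |J| and G_j(s) = sum_i |s - x_i|^2 + |s - x_j|^2, so that
   P = max_j G_j.  Since M_j is the centroid of X with x_j counted twice,
   G_j(C + h) = G_j(C) + (n+1) (2 <h, C - M_j> + |h|^2), and equidistance makes
   all G_j(C) equal to P(C).  If C = sum_j w_j M_j is a convex combination,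
   averaging these expansions with the weights w_j gives
   P(C + h) >= P(C) + (n+1) |h|^2.  Otherwise, by Farkas' lemma, some u has
   <u, C - M_j> >= 1 for every j, and a small step from C in direction -u
   decreases every G_j, hence P. *)

Lemma sum_enum_rank (V : nmodType) (J : finType) (F : 'I_#|J| -> V) :
  \sum_(j : J) F (enum_rank j) = \sum_i F i.
Proof. by rewrite big_enum_val; apply: eq_bigr => i _; rewrite enum_valK. Qed.

Section DotProduct.
Variable R : realFieldType.

Definition dotr k (u v : 'rV[R]_k) : R := \sum_i u 0 i * v 0 i.

Lemma dotrC k (u v : 'rV[R]_k) : dotr u v = dotr v u.
Proof. by apply: eq_bigr => i _; rewrite mulrC. Qed.

Lemma dotr_is_linear k (u : 'rV[R]_k) : linear_for *%R (dotr u).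
Proof.
move=> a v w; rewrite /dotr mulr_sumr -big_split; apply: eq_bigr => i _.
by rewrite !mxE mulrDr mulrCA.
Qed.

HB.instance Definition _ k (u : 'rV[R]_k) :=
  GRing.isLinear.Build R 'rV[R]_k R *%R (dotr u) (dotr_is_linear u).

Lemma dotrZl k a (u v : 'rV[R]_k) : dotr (a *: u) v = a * dotr u v.
Proof. by rewrite dotrC linearZ /= dotrC. Qed.

Lemma dotrNl k (u v : 'rV[R]_k) : dotr (- u) v = - dotr u v.
Proof. by rewrite dotrC linearN /= dotrC. Qed.

Lemma dotrrD k (u v : 'rV[R]_k) :
  dotr (u + v) (u + v) = dotr u u + 2 * dotr v u + dotr v v.
Proof.
rewrite linearD /= !(dotrC (u + v)) !linearD /= (dotrC u v); ring.
Qed.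

Lemma dotrr_ge0 k (v : 'rV[R]_k) : 0 <= dotr v v.
Proof. by apply: sumr_ge0 => i _; rewrite -expr2 sqr_ge0. Qed.

Lemma dotrr_gt0 k (v : 'rV[R]_k) : v != 0 -> 0 < dotr v v.
Proof.
move=> v_neq0; have [i vi_neq0] : exists i, v 0 i != 0.
  apply/existsP; apply: contraR v_neq0 => /existsPn v0.
  by apply/eqP/rowP => i; rewrite mxE; apply/eqP/negbNE.
rewrite /dotr (bigD1 i) //= ltr_pwDl //; first by rewrite -expr2 exprn_even_gt0.
by apply: sumr_ge0 => j _; rewrite -expr2 sqr_ge0.
Qed.

Lemma dotr_row_mx k1 k2 (u1 v1 : 'rV[R]_k1) (u2 v2 : 'rV[R]_k2) :
  dotr (row_mx u1 u2) (row_mx v1 v2) = dotr u1 v1 + dotr u2 v2.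
Proof.
by rewrite /dotr big_split_ord /=; congr (_ + _); apply: eq_bigr => i _;
  rewrite ?row_mxEl ?row_mxEr.
Qed.

Lemma farkas k n (y : 'I_n -> 'rV[R]_k) (b : 'rV[R]_k) :
  (exists2 c : 'I_n -> R, (forall i, 0 <= c i) & b = \sum_i c i *: y i) \/
  (exists2 u, (forall i, 0 <= dotr u (y i)) & dotr u b < 0).
Proof.
elim: n y b => [|n IH] y b.
  have [->|b_neq0] := eqVneq b 0.
    by left; exists (fun=> 0) => //; rewrite big_ord0.
  by right; exists (- b) => [[]//|]; rewrite dotrNl oppr_lt0 dotrr_gt0.
pose y' i := y (lift ord0 i).
have [[c c_ge0 ->]|[u u_ge0 ub_lt0]] := IH y' b.
  left; exists (fun i => if unlift ord0 i is Some i' then c i' else 0).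
    by move=> i; case: unlift.
  rewrite big_ord_recl unlift_none scale0r add0r.
  by apply: eq_bigr => i _; rewrite liftK.
have [ua_ge0|ua_lt0] := lerP 0 (dotr u (y ord0)).
  by right; exists u => // i; case: (unliftP ord0 i) => [i' ->|->] //; apply: u_ge0.
(* y 0 violates u: project along it onto the hyperplane <u, _> = 0 and recurse. *)
set a := y ord0 in ua_lt0 *; set al := dotr u a in ua_lt0 *.
pose pi v := v - (dotr u v / al) *: a.
have [[c c_ge0 pib]|[w w_ge0 wb_lt0]] := IH (pi \o y') (pi b).
  pose mu := (dotr u b - \sum_i c i * dotr u (y' i)) / al.
  left; exists (fun i => if unlift ord0 i is Some i' then c i' else mu).
    move=> i; case: (unliftP ord0 i) => [i' _|_]; first exact: c_ge0.
    rewrite /mu mulr_le0 ?invr_le0 ?ltW //.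
    rewrite subr_lt0 (lt_le_trans ub_lt0) //.
    by apply: sumr_ge0 => j _; rewrite mulr_ge0.
  rewrite big_ord_recl unlift_none; under eq_bigr do rewrite liftK.
  rewrite -[b](subrK ((dotr u b / al) *: a)) -/(pi b) pib.
  have -> : \sum_i c i *: (pi \o y') i =
      \sum_i c i *: y' i - ((\sum_i c i * dotr u (y' i)) / al) *: a.
    rewrite mulr_suml scaler_suml -sumrB; apply: eq_bigr => i _.
    by rewrite /= /pi scalerBr scalerA mulrA.
  by rewrite /mu mulrBl scalerBl [RHS]addrC addrA addrAC.
have wpi v : dotr (w - (dotr w a / al) *: u) v = dotr w (pi v).
  by rewrite /pi dotrC !linearB !linearZ /= (dotrC v w) (dotrC v u); ring.
right; exists (w - (dotr w a / al) *: u); last by rewrite wpi.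
move=> i; rewrite wpi; case: (unliftP ord0 i) => [i' ->|->]; first exact: w_ge0.
by rewrite /pi -/al divff ?lt_eqF // scale1r subrr linear0.
Qed.

Lemma conv_or_separated k (J : finType) (y : J -> 'rV[R]_k) (p : 'rV[R]_k) :
  (exists w : J -> R,
     (forall j, 0 <= w j) /\ \sum_j w j = 1 /\ p = \sum_j w j *: y j) \/
  (exists u, forall j, 1 <= dotr u (p - y j)).
Proof.
(* Farkas' lemma for the lifted points (p - y j, 1) and the target (0, 1). *)
have [[c c_ge0 e]|[u u_ge0 u_lt0]] :=
  @farkas (k + 1) #|J| (fun i => row_mx (p - y (enum_val i)) 1) (row_mx 0 1).
  have c1 : \sum_i c i = 1.
    move/(congr1 (fun M => rsubmx M 0 0)): e.
    rewrite row_mxKr linear_sum summxE mxE /= => /esym; apply: eq_trans.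
    by apply: eq_bigr => i _; rewrite linearZ /= row_mxKr !mxE mulr1.
  have cp : p = \sum_i c i *: y (enum_val i).
    move/(congr1 lsubmx): e; rewrite row_mxKl linear_sum /=.
    under eq_bigr do rewrite linearZ /= row_mxKl scalerBr.
    by rewrite sumrB -scaler_suml c1 scale1r => /esym/eqP; rewrite subr_eq0 => /eqP.
  left; exists (fun j => c (enum_rank j)); split=> [j|]; first exact: c_ge0.
  rewrite sum_enum_rank c1 cp -(sum_enum_rank (fun i => c i *: y (enum_val i))).
  by split=> //; apply: eq_bigr => j _; rewrite enum_rankK.
right; rewrite -(hsubmxK u) in u_ge0 u_lt0.
set u1 := lsubmx u in u_ge0 u_lt0 *; set u2 := rsubmx u in u_ge0 u_lt0 *.
rewrite dotr_row_mx linear0 add0r in u_lt0.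
exists ((- dotr u2 1)^-1 *: u1) => j; rewrite dotrZl ler_pdivlMl ?oppr_gt0 //.
by have := u_ge0 (enum_rank j); rewrite dotr_row_mx enum_rankK mulr1; lra.
Qed.

End DotProduct.

Section QuadraticPower.
Variables (R : realType) (J : finType) (x : J -> 'rV[R]_2).

(* The branch of P in which x_j is the farthest point. *)
Definition Gpow (j : J) (s : 'rV[R]_2) : R :=
  \sum_i enorm (s - x i) ^+ 2 + enorm (s - x j) ^+ 2.

Lemma enorm_sqr (v : 'rV[R]_2) : enorm v ^+ 2 = dotr v v.
Proof.
rewrite sqr_sqrtr; last by apply: sumr_ge0 => i _; rewrite sqr_ge0.
by apply: eq_bigr => i _; rewrite expr2.
Qed.

Lemma Gpow_le_Ppow j s : Gpow j s <= Ppow x s.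
Proof. by rewrite lerD2l le_bigmax. Qed.

Lemma Ppow_lt (j0 : J) s a : (forall j, Gpow j s < a) -> Ppow x s < a.
Proof.
rewrite /Gpow /Ppow => Ga; rewrite -ltrBrDl; apply: bigmax_lt => [|i _].
  by rewrite subr_gt0 (le_lt_trans _ (Ga j0)) // lerDl sqr_ge0.
by rewrite ltrBrDl.
Qed.

Lemma sum_sub_Mpt j s :
  \sum_i (s - x i) + (s - x j) = #|J|.+1%:R *: (s - Mpt x j).
Proof.
rewrite scalerBr scalerA mulfV ?pnatr_eq0 // scale1r scaler_nat mulrSr.
by rewrite sumrB sumr_const opprD addrACA [- x j + _]addrC.
Qed.

Lemma Gpow_shift j s h :
  Gpow j (s + h) = Gpow j s + #|J|.+1%:R * (2 * dotr h (s - Mpt x j) + dotr h h).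
Proof.
have centroid : \sum_i dotr h (s - x i) + dotr h (s - x j) =
    #|J|.+1%:R * dotr h (s - Mpt x j).
  by rewrite -linear_sum -linearD /= sum_sub_Mpt linearZ.
rewrite /Gpow; under eq_bigr do rewrite enorm_sqr (addrAC s) dotrrD.
under [in RHS]eq_bigr do rewrite enorm_sqr.
rewrite !enorm_sqr (addrAC s) dotrrD !big_split /= -mulr_sumr sumr_const.
rewrite mulrDr mulrCA -centroid -[dotr h h *+ _]mulr_natl -[#|J|.+1%:R]natr1; ring.
Qed.

Variables (C : 'rV[R]_2) (r : R).
Hypothesis equidistant : forall j, enorm (C - x j) = r.

Lemma Gpow_equidistant j : Gpow j C = #|J|.+1%:R * r ^+ 2.
Proof.
rewrite /Gpow; under eq_bigr do rewrite equidistant.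
by rewrite equidistant sumr_const -mulr_natl -natr1; ring.
Qed.

Lemma Ppow_equidistant_le : Ppow x C <= #|J|.+1%:R * r ^+ 2.
Proof.
rewrite /Ppow; under eq_bigr do rewrite equidistant.
rewrite sumr_const -[r ^+ 2 *+ _]mulr_natl -natr1 mulrDl mul1r lerD2l.
by apply: bigmax_le => [|i _]; rewrite ?sqr_ge0 ?equidistant.
Qed.

Lemma qmp_centre_of_in_conv : in_conv (Mpt x) C -> is_qmp_centre x C.
Proof.
move=> [w [w_ge0 [w1 Cw]]] s; rewrite -(subrKC C s); set h := s - C.
have orth : \sum_j w j * dotr h (C - Mpt x j) = 0.
  under eq_bigr do rewrite -linearZ /= scalerBr.
  by rewrite -linear_sum /= sumrB -scaler_suml w1 scale1r -Cw subrr linear0.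
apply: le_trans Ppow_equidistant_le _.
have -> : Ppow x (C + h) = \sum_j w j * Ppow x (C + h) by rewrite -mulr_suml w1 mul1r.
apply: le_trans (ler_sum _ (fun j _ => ler_wpM2l (w_ge0 j) (Gpow_le_Ppow j (C + h)))).
under eq_bigr do rewrite Gpow_shift Gpow_equidistant.
rewrite (eq_bigr (fun j => w j * (#|J|.+1%:R * r ^+ 2 + #|J|.+1%:R * dotr h h)
    + 2 * #|J|.+1%:R * (w j * dotr h (C - Mpt x j)))) => [|j _]; last by ring.
rewrite big_split /= -mulr_suml -mulr_sumr w1 orth.
by have := mulr_ge0 (ler0n _ #|J|.+1) (dotrr_ge0 h); lra.
Qed.

Lemma Ppow_descent (j0 : J) u : (forall j, 1 <= dotr u (C - Mpt x j)) ->
  Ppow x (C - (dotr u u + 1)^-1 *: u) < Ppow x C.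
Proof.
move=> u_sep; set t := (dotr u u + 1)^-1.
have q_ge0 := dotrr_ge0 u.
have t_gt0 : 0 < t by rewrite invr_gt0; lra.
have tq_lt1 : t * dotr u u < 1 by rewrite ltr_pdivrMl; lra.
apply: lt_le_trans (Gpow_le_Ppow j0 C); apply: (Ppow_lt j0) => j.
rewrite Gpow_shift Gpow_equidistant -(Gpow_equidistant j0) gtrDl pmulr_rlt0 //.
have := u_sep j; rewrite !dotrNl !dotrZl [dotr u (- _)]linearN /=.
by rewrite [dotr u (t *: u)]linearZ /=; nra.
Qed.

End QuadraticPower.

Theorem proposition3 (R : realType) (J : finType) (x : J -> 'rV[R]_2)
    (C : 'rV[R]_2) :
  (0 < #|J|)%N -> injective x ->
  is_1centre x C ->
  (exists r : R, forall j : J, enorm (C - x j) = r) ->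
  (is_qmp_centre x C <-> in_conv (Mpt x) C).
Proof.
move=> /card_gt0P [j0 _] _ _ [r equidistant]; split; last first.
  exact: qmp_centre_of_in_conv equidistant.
move=> qmpC; have [//|[u u_sep]] := conv_or_separated (Mpt x) C.
have := Ppow_descent equidistant j0 u_sep.
by rewrite ltNge qmpC.
Qed.
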